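(* Let $G$ be a finite group, $H$ a normal subgroup of $G$, and $K$ a subgroup of $G$ with either $H\cap K=\{1\}$ or $K\subseteq H$. Let $J=[HK:K]$ and let $\{t_1,\dots,t_J\}$ be a transversal for the left cosets of $K$ in $HK$. Let $\lambda:G\to\mathbb{Z}$ be defined by $\lambda(g)=J-1$ if $g\in K$, $\lambda(g)=-1$ if $g\in HK\setminus K$, and $\lambda(g)=0$ if $g\notin HK$. Then every subset of cardinality $J-1$ of the collection of functions $\{[t_j,\lambda]:j=1,\dots,J\}$ is linearly independent (over $\mathbb{Z}$).
   Context: $HK=\{hk:h\in H,k\in K\}$ is a subgroup since $H$ is normal. For $g\in G$ and a function $f:G\to\mathbb{Z}$, $[g,f]$ denotes the function $x\mapsto f(g^{-1}x)$. *)

From HB Require Import structures.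
From mathcomp Require Import all_boot all_order all_algebra all_fingroup.
Set Implicit Arguments. Unset Strict Implicit. Unset Printing Implicit Defensive.
Import GRing.Theory Num.Theory.

Definition lam (gT : finGroupType) (H K : {set gT}) (g : gT) : int :=
  if g \in K then (#|H * K : K|%g%:Z - 1)%R
  else if g \in (H * K)%g then (-1)%R else 0%R.

(* the left translate [t, f] : x |-> f (t^-1 x) *)
Definition ltrans (gT : finGroupType) (t : gT) (f : gT -> int) : gT -> int :=
  fun x => f (t^-1 * x)%g.

From HB Require Import structures.
From mathcomp Require Import all_boot all_order all_algebra all_fingroup.
Import GRing.Theory Num.Theory.

Set Implicit Arguments.
Unset Strict Implicit.
Unset Printing Implicit Defensive.

(* Evaluate the relation at a point t of S. As S lies in a transversal of K
   in the group HK, [s, lambda](t) = lambda(s^-1 t) is J - 1 for s = t and -1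
   for the other s in S, so J c_t equals the sum of all c_s, for every t in S.
   Summing over the J - 1 points of S forces that sum, hence every c_t, to
   vanish. *)

Lemma transversal_eq (gT : finGroupType) (K : {group gT}) (A X : {set gT}) :
  is_transversal X (lcosets K A) A ->
  {in X &, forall s t, s^-1 * t \in K -> s = t}%g.
Proof.
move=> trX s t sX tX stK.
have sK_coset : (s *: K \in lcosets K A)%g.
  by rewrite -lcosetE imset_f // (subsetP (transversal_sub trX)).
have : t \in X :&: (s *: K)%g by rewrite inE tX mem_lcoset.
rewrite (setI_transversal_pblock trX s sK_coset) inE => /eqP->.
have : s \in X :&: (s *: K)%g by rewrite inE sX lcoset_refl.
by rewrite (setI_transversal_pblock trX s sK_coset) inE => /eqP.
Qed.

Lemma lam_transversal (gT : finGroupType) (H K : {group gT}) (X : {set gT}) :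
  K \subset 'N(H)%g -> is_transversal X (lcosets K (H * K))%g (H * K)%g ->
  {in X &, forall s t,
    lam H K (s^-1 * t)%g = (#|H * K : K|%g%:Z * (s == t)%:Z - 1)%R}.
Proof.
move=> nHK trX s t sX tX; rewrite /lam.
have [<-|neq_st] := eqVneq s t; first by rewrite mulVg group1 mulr1.
have -> : (s^-1 * t \in K)%g = false.
  by apply: contraNF neq_st => /(transversal_eq trX sX tX)->.
rewrite mulr0 sub0r.
have sX_HK := subsetP (transversal_sub trX).
by rewrite -norm_joinEr // in sX_HK *; rewrite groupM ?groupV ?sX_HK.
Qed.

Lemma scaled_eq_sum_eq0 (R : numDomainType) (I : finType) (S : {set I})
    (a : I -> R) :
  (forall i, i \in S -> #|S|.+1%:R * a i = \sum_(j in S) a j)%R ->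
  forall i, i \in S -> a i = 0%R.
Proof.
move=> eq_a.
have sum0 : (\sum_(j in S) a j = 0)%R.
  have : (\sum_(i in S) #|S|.+1%:R * a i = \sum_(i in S) \sum_(j in S) a j)%R.
    exact: eq_bigr.
  rewrite -mulr_sumr sumr_const mulr_natl mulrS => /(canRL (addrK _)).
  by rewrite subrr.
move=> i Si; apply/eqP; have := eq_a i Si.
by rewrite sum0 => /eqP; rewrite mulf_eq0 pnatr_eq0.
Qed.

Lemma sum_lam_transversal (gT : finGroupType) (H K : {group gT})
    (X S : {set gT}) (c : gT -> int) :
  K \subset 'N(H)%g -> is_transversal X (lcosets K (H * K))%g (H * K)%g ->
  S \subset X -> forall t, t \in S ->
  (\sum_(s in S) c s * lam H K (s^-1 * t)%g
     = #|H * K : K|%g%:R * c t - \sum_(s in S) c s)%R.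
Proof.
move=> nHK trX sSX t St.
rewrite (eq_bigr (fun s => c s * (#|H * K : K|%g%:Z * (s == t)%:Z) - c s)%R).
  rewrite big_split /= sumrN (bigD1 t) //= eqxx big1 => [|s /andP[_ /negPf->]].
    by rewrite mulr1 addr0 mulrC natz.
  by rewrite /= !mulr0.
by move=> s Ss; rewrite (lam_transversal nHK trX) ?(subsetP sSX) // mulrBr mulr1.
Qed.

Theorem lemma3p2 (gT : finGroupType) (G H K : {group gT})
  (nHG : (H <| G)%g) (sKG : K \subset G)
  (hHK : (H :&: K = 1)%g \/ K \subset H)
  (X : {set gT})
  (hX : is_transversal X (lcosets K (H * K))%g (H * K)%g)
  (S : {set gT}) (sSX : S \subset X) (cardS : #|S| = (#|H * K : K|%g - 1)%N)
  (c : gT -> int)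
  (hc : forall x, x \in G -> (\sum_(t in S) c t * ltrans t (lam H K) x)%R = 0%R) :
  forall t, t \in S -> c t = 0%R.
Proof.
have nHK : K \subset 'N(H)%g := subset_trans sKG (normal_norm nHG).
have sSG : S \subset G.
  apply: subset_trans sSX (subset_trans (transversal_sub hX) _).
  exact: mul_subG (normal_sub nHG) sKG.
have cardS1 : #|S|.+1 = #|H * K : K|%g.
  by rewrite cardS subn1 prednK // -norm_joinEr // indexg_gt0.
apply: scaled_eq_sum_eq0 => t St; apply/eqP; rewrite -subr_eq0 cardS1.
have := hc t (subsetP sSG t St).
by rewrite /ltrans (sum_lam_transversal c nHK hX sSX St) => ->.
Qed.
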